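(* Let $\sigma=\langle\mathcal V,\mathcal C,S,B\rangle$ be an approval-based multi-winner election. Fix any run of ODH on $\sigma$ (any tie-breaking), and for $i=0,\dots,S-1$ let $\mathcal C_e^i$ be the set of the first $i$ candidates it chooses ($\mathcal C_e^0=\emptyset$). Let $c\in\mathcal C\setminus\mathcal C_e^i$, and let $\{y_1,\dots,y_n\}\subseteq2^{\mathcal C}$ be such that $c\in y_j$ for every $j=1,\dots,n$. Then $$\mathrm{maxMin}(\sigma,\mathcal C_e^i\cup\{c\})\ \ge\ \frac{\sum_{j=1}^nB(y_j)}{\big|\mathcal C_e^i\cap\bigcup_{j=1}^ny_j\big|+1}.$$
   Context: An approval-based multi-winner election is a tuple $\sigma=\langle \mathcal V,\mathcal C,S,B\rangle$, where $\mathcal V$ is a finite set of agents, $\mathcal C$ is a finite set of candidates, $1\le S\le|\mathcal C|$ is an integer, and $B:2^{\mathcal C}\to\mathbb N$ gives, for each $\mathcal A\subseteq\mathcal C$, the number $B(\mathcal A)$ of agents whose ballot is exactly $\mathcal A$ (with $\sum_{\mathcal A}B(\mathcal A)\le|\mathcal V|$). For a non-empty $\mathcal A\subseteq\mathcal C$, the family $\mathfrak F_{\sigma,\mathcal A}$ is the set of all $F:2^{\mathcal C}\times\mathcal A\to\mathbb R$ such that: - $F(y,c)\ge0$ for all $y$ and $c$; - $F(y,c)=0$ if $c\notin y$; - $\sum_{c\in\mathcal A\cap y}F(y,c)=B(y)$ whenever $y\cap\mathcal A\neq\emptyset$. We write $\mathrm{Supp}_F(c)=\sum_yF(y,c)$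 and $\mathrm{maxMin}(\sigma,\mathcal A)=\sup_{F\in\mathfrak F_{\sigma,\mathcal A}}\min_{c\in\mathcal A}\mathrm{Supp}_F(c)$. We also write $\mathfrak F^{\mathrm{opt}}_{\sigma,\mathcal A}=\{F\in\mathfrak F_{\sigma,\mathcal A}:\mathrm{Supp}_F(c)\ge\mathrm{maxMin}(\sigma,\mathcal A)\ \forall c\in\mathcal A\}$. The Open D'Hondt (ODH) rule proceeds as follows. Start with $\mathcal C_e=\emptyset$ and repeat $S$ times: - for each $c\in\mathcal C\setminus\mathcal C_e$, choose any $F\in\mathfrak F^{\mathrm{opt}}_{\sigma,\mathcal C_e\cup\{c\}}$ and set $s_c=\mathrm{Supp}_F(c)$; - then add to $\mathcal C_e$ some $w$ maximizing $s_w$ (ties broken arbitrarily). Finally, output $\mathcal C_e$. *)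

From Stdlib Require Import Reals ClassicalEpsilon.
From mathcomp Require Import all_boot.
Set Implicit Arguments. Unset Strict Implicit. Unset Printing Implicit Defensive.

Section ODH.
Variable C : finType.

Definition Supp (F : {set C} -> C -> R) (c : C) : R :=
  \big[Rplus/R0]_y F y c.

(* F belongs to the family F_{sigma,A}.  F is given as a function on
   2^C x C, but only its values at candidates c \in A are constrained/used. *)
Definition inFam (B : {set C} -> nat) (A : {set C}) (F : {set C} -> C -> R) : Prop :=
  (forall (y : {set C}) (c : C), c \in A -> Rle R0 (F y c)) /\
  (forall (y : {set C}) (c : C), c \in A -> c \notin y -> F y c = R0) /\
  (forall y : {set C}, (A :&: y) != set0 ->
     \big[Rplus/R0]_(c in A :&: y) F y c = INR (B y)).

(* Supremum of a set of reals (the least upper bound, chosen classically;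
   it exists for all sets used below). *)
Definition Rsup (E : R -> Prop) : R := epsilon (inhabits R0) (fun m => is_lub E m).

(* maxMin(sigma, A) = sup_{F in F_{sigma,A}} min_{c in A} Supp_F(c). *)
Definition maxMin (B : {set C} -> nat) (A : {set C}) : R :=
  Rsup (fun m => exists F, inFam B A F /\
          (exists2 c, c \in A & m = Supp F c) /\
          (forall c, c \in A -> Rle m (Supp F c))).

Definition inFamOpt (B : {set C} -> nat) (A : {set C}) (F : {set C} -> C -> R) : Prop :=
  inFam B A F /\ forall c, c \in A -> Rle (maxMin B A) (Supp F c).

Definition Ce (ws : seq C) (i : nat) : {set C} := [set x | x \in take i ws].

(* ws is the sequence of winners (in order of selection) of a run of ODH with
   S seats: at each round i, for each remaining candidate c some F in
   F_opt_{sigma, Ce_i U {c}} is chosen, s_c := Supp_F(c), and the i-th winner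
   maximizes s among remaining candidates. *)
Definition ODH_run (B : {set C} -> nat) (S : nat) (ws : seq C) : Prop :=
  size ws = S /\
  forall i, (i < S)%N ->
    exists s : C -> R,
      (forall c, c \notin Ce ws i ->
         exists F, inFamOpt B (c |: Ce ws i) F /\ s c = Supp F c) /\
      forall w0 : C, let w := nth w0 ws i in
        w \notin Ce ws i /\
        (forall c, c \notin Ce ws i -> Rle (s c) (s w)).
End ODH.

(* A Hall-type argument. Moving support back to a least-supported candidate
   along ballots that carry positive flow, an optimal flow for [A] that cannot
   be improved exhibits a tight set [D] within [A]: the voters approving [D]
   weigh at most maxMin(A) |D|. Hence maxMin(A) >= t as soon as every D within
   [A] is approved by voters of weight at least t |D|.
   For t the claimed bound this Hall condition holds on each C_e^j, j <= i, by
   induction on j. A set containing [c] is approved by the y_j's voters and by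
   those of its members outside {c} and the y_j, and has at most
   |C_e^i /\ U_j y_j| + 1 other members; so t <= maxMin(C_e^j + c). The winner
   of round j is supported at least as well as [c], so the condition passes to
   C_e^(j+1). *)
From Stdlib Require Import Reals Lra ClassicalEpsilon Classical.
From HB Require Import structures.
From mathcomp Require Import all_boot.
Set Implicit Arguments. Unset Strict Implicit. Unset Printing Implicit Defensive.

Lemma RplusA : associative Rplus. Proof. by move=> *; rewrite Rplus_assoc. Qed.
HB.instance Definition _ := Monoid.isComLaw.Build R R0 Rplus RplusA Rplus_comm Rplus_0_l.
Open Scope R_scope.

Section RealSums.
Variable I : finType.
Implicit Types (P Q : pred I) (f g : I -> R).

Lemma sumR_ge0 P f : (forall i, P i -> 0 <= f i) -> 0 <= \big[Rplus/R0]_(i | P i) f i.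
Proof. move=> h; apply: (big_ind (fun x => 0 <= x)) => //; [lra | move=> *; lra]. Qed.

Lemma sumR_le P f g : (forall i, P i -> f i <= g i) ->
  \big[Rplus/R0]_(i | P i) f i <= \big[Rplus/R0]_(i | P i) g i.
Proof. move=> h; apply: (big_ind2 (fun x y => x <= y)) => //; [lra | move=> *; lra]. Qed.

Lemma sumR_le_subset P Q f : (forall i, P i -> Q i) -> (forall i, Q i -> 0 <= f i) ->
  \big[Rplus/R0]_(i | P i) f i <= \big[Rplus/R0]_(i | Q i) f i.
Proof.
move=> hPQ h0; rewrite [X in _ <= X](bigID P) /=.
have -> : \big[Rplus/R0]_(i | Q i && P i) f i = \big[Rplus/R0]_(i | P i) f i.
  by apply: eq_bigl => i; case hP: (P i); rewrite ?andbT ?andbF //; apply: hPQ.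
have : 0 <= \big[Rplus/R0]_(i | Q i && ~~ P i) f i by apply: sumR_ge0 => i /andP [/h0].
lra.
Qed.

Lemma sumR_const (D : {set I}) (a : R) : \big[Rplus/R0]_(i in D) a = a * INR #|D|.
Proof.
rewrite big_const; elim: #|D| => [|n IH]; first by rewrite /=; ring.
by rewrite S_INR iterS IH; ring.
Qed.

Lemma sumR_scale P f (a : R) :
  \big[Rplus/R0]_(i | P i) (a * f i) = a * \big[Rplus/R0]_(i | P i) f i.
Proof.
by symmetry; apply: (big_morph (fun x => a * x)) => [x y|]; rewrite ?Rmult_plus_distr_l ?Rmult_0_r.
Qed.

Lemma sumR_sub P f g :
  \big[Rplus/R0]_(i | P i) (f i - g i) =
  \big[Rplus/R0]_(i | P i) f i - \big[Rplus/R0]_(i | P i) g i.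
Proof.
rewrite /Rminus big_split /=; congr (_ + _); symmetry.
by apply: (big_morph Ropp) => [x y|]; rewrite ?Ropp_plus_distr ?Ropp_0.
Qed.

Lemma INR_sum P (f : I -> nat) :
  INR (\sum_(i | P i) f i)%N = \big[Rplus/R0]_(i | P i) INR (f i).
Proof. by apply: (big_morph INR) => //; apply: plus_INR. Qed.

Lemma exists_argminR (D : {set I}) f : D != set0 ->
  exists2 i0, i0 \in D & forall i, i \in D -> f i0 <= f i.
Proof.
suff: forall s : seq I, s != [::] -> exists2 i0, i0 \in s & forall i, i \in s -> f i0 <= f i.
  move=> h /set0Pn [x xD]; have [|i0] := h (enum D).
    by apply/eqP => e; move: xD; rewrite -mem_enum e.
  by rewrite mem_enum => i0D hmin; exists i0 => // i iD; apply: hmin; rewrite mem_enum.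
elim=> [//|a s IH] _; case: (eqVneq s [::]) => [->|/IH [b bs hb]].
  by exists a => [|i]; rewrite ?inE // => /eqP ->; lra.
case: (Rle_dec (f a) (f b)) => hab.
  by exists a => [|i]; rewrite ?inE ?eqxx // => /orP [/eqP -> | /hb]; lra.
by exists b => [|i]; rewrite inE ?bs ?orbT // => /orP [/eqP -> | /hb]; lra.
Qed.

End RealSums.

Section Flows.
Variables (C : finType) (B : {set C} -> nat).
Implicit Types (A D : {set C}) (F G : {set C} -> C -> R).

Definition approvers D : R := \big[Rplus/R0]_(y : {set C} | y :&: D != set0) INR (B y).

Lemma approvers_ge0 D : 0 <= approvers D.
Proof. by apply: sumR_ge0 => y _; apply: pos_INR. Qed.

Lemma flow_le_weight A F y x : inFam B A F -> x \in A -> F y x <= INR (B y).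
Proof.
case=> h0 [hz hs] xA; case xy: (x \in y); last by rewrite hz ?xy //; apply: pos_INR.
have Ay : A :&: y != set0 by apply/set0Pn; exists x; rewrite inE xA xy.
rewrite -(hs y Ay) (bigD1 x) /=; last by rewrite inE xA xy.
suff: 0 <= \big[Rplus/R0]_(w in A :&: y | w != x) F y w by lra.
by apply: sumR_ge0 => w /andP []; rewrite inE => /andP [wA _] _; apply: h0.
Qed.

Lemma maxMin_ge_min A F x0 : inFam B A F -> x0 \in A ->
  (forall x, x \in A -> Supp F x0 <= Supp F x) -> Supp F x0 <= maxMin B A.
Proof.
move=> hF x0A hmin; rewrite /maxMin /Rsup.
set E := fun m : R => exists _ : {set C} -> C -> R, _.
have Ex0 : E (Supp F x0) by exists F; split => //; split => //; exists x0.
have bE : bound E.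
  exists (\big[Rplus/R0]_(y : {set C}) INR (B y)) => _ [G [hG [[x xA ->] _]]].
  by apply: sumR_le => y _; apply: flow_le_weight hG xA.
have [m hm] := completeness E bE (ex_intro _ _ Ex0).
by case: (epsilon_spec (inhabits R0) _ (ex_intro _ m hm)) => ub _; apply: ub.
Qed.

Lemma sum_Supp_le_approvers A F D : inFam B A F -> D \subset A ->
  \big[Rplus/R0]_(z in D) Supp F z <= approvers D.
Proof.
move=> [h0 [hz hs]] DA; rewrite /Supp exchange_big /approvers [X in _ <= X]big_mkcond /=.
apply: sumR_le => y _; case: ifP => [/set0Pn [w] | /negbFE/eqP yD0].
  rewrite !inE => /andP [wy wD].
  have Ay : A :&: y != set0 by apply/set0Pn; exists w; rewrite inE (subsetP DA _ wD) wy.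
  rewrite -(hs y Ay) (bigID (mem y)) /= [X in _ + X]big1 => [|x /andP [xD xy]].
    rewrite Rplus_0_r; apply: sumR_le_subset => [x /andP [xD xy] | x].
      by rewrite inE (subsetP DA _ xD) xy.
    by rewrite inE => /andP [xA _]; apply: h0.
  by rewrite hz ?(subsetP DA _ xD).
rewrite big1 => [|x xD]; first lra.
apply: hz; first exact: subsetP DA _ xD.
by apply: contraT => /negbNE xy; move/setP/(_ x): yD0; rewrite !inE xy xD.
Qed.

Definition delta (x w : C) : R := if w == x then 1 else 0.

Lemma sum_delta D x : x \in D -> \big[Rplus/R0]_(w in D) delta x w = 1.
Proof.
by move=> xD; rewrite (bigD1 x) //= /delta eqxx big1 => [|w /andP [_ /negbTE ->]]; ring.
Qed.

Definition transfer F F' (e : R) (z x : C) : Prop :=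
  forall w, Supp F' w = Supp F w + e * (delta x w - delta z w).

Definition mix (l : R) F G : {set C} -> C -> R := fun y w => l * F y w + (1 - l) * G y w.

Lemma Supp_mix l F G w : Supp (mix l F G) w = l * Supp F w + (1 - l) * Supp G w.
Proof. by rewrite /Supp /mix big_split /= !sumR_scale. Qed.

Lemma inFam_mix A l F G : 0 <= l <= 1 -> inFam B A F -> inFam B A G -> inFam B A (mix l F G).
Proof.
move=> hl [F0 [Fz Fs]] [G0 [Gz Gs]]; rewrite /mix.
split; [|split] => [y x xA | y x xA xy | y Ay].
- by have := F0 y x xA; have := G0 y x xA; nra.
- by rewrite Fz ?Gz //; ring.
- by rewrite big_split /= !sumR_scale Fs ?Gs //; ring.
Qed.

Definition reroute F y u v (e : R) : {set C} -> C -> R :=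
  fun y0 w => F y0 w + (if y0 == y then e * (delta u w - delta v w) else 0).

Lemma transfer_reroute F y u v e : transfer F (reroute F y u v e) e v u.
Proof. by move=> w; rewrite /Supp /reroute big_split /= -big_mkcond big_pred1_eq. Qed.

Lemma inFam_reroute A F y u v e : inFam B A F -> u \in A :&: y -> v \in A :&: y ->
  0 <= e <= F y v -> inFam B A (reroute F y u v e).
Proof.
move=> [h0 [hz hs]]; rewrite !inE => /andP [uA uy] /andP [vA vy] he; rewrite /reroute.
split; [|split] => [y0 x xA | y0 x xA xy0 | y0 Ay0]; case: eqP => [ey|_]; try subst y0.
- case: (eqVneq x v) => [->|xv]; rewrite /delta ?eqxx.
    by case: eqP => _; lra.
  by rewrite (negbTE xv); have := h0 y x xA; case: eqP => _; nra.
- by rewrite Rplus_0_r; apply: h0.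
- have xu : x != u by apply: contraNneq xy0 => ->.
  have xv : x != v by apply: contraNneq xy0 => ->.
  by rewrite hz // /delta (negbTE xu) (negbTE xv); ring.
- by rewrite hz //; ring.
- by rewrite big_split /= hs // sumR_scale sumR_sub !sum_delta ?inE ?uA ?uy ?vA ?vy //; ring.
- by rewrite big_split /= hs // big1 //; ring.
Qed.

(* [reach A F x z]: support can be pulled from [z] back to [x] along a chain of
   ballots, each of which gives positive flow to the next candidate. *)
Inductive reach A F x : C -> Prop :=
| reach_refl : reach A F x x
| reach_step z' (y : {set C}) z : reach A F x z' -> z' \in y -> z \in A -> 0 < F y z -> reach A F x z.

Lemma reach_in A F x z : x \in A -> reach A F x z -> z \in A.
Proof. by move=> xA; elim. Qed.

Lemma reach_transfer A F x z : inFam B A F -> x \in A -> reach A F x z ->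
  exists2 e0, 0 < e0 &
    forall e, 0 <= e <= e0 -> exists2 F', inFam B A F' & transfer F F' e z x.
Proof.
move=> hF xA; elim=> [|u y v hr [e1 e1p IH] uy vA Fyv].
  by exists 1 => [|e _]; [lra | exists F => // w; ring].
have uA := reach_in xA hr.
have vy : v \in y by apply: contraT => vy; move: Fyv; rewrite hF.2.1 //; lra.
have := Rmin_l e1 (F y v); have := Rmin_r e1 (F y v); have := Rmin_pos _ _ e1p Fyv.
set m := Rmin e1 (F y v) => m0 mF me1.
exists (m / 2) => [|e he]; first lra.
(* Average the transfer [u ~> x] with a rerouting of ballot [y] from [v] to [u]. *)
have [F1 hF1 tr1] := IH (2 * e) ltac:(lra).
exists (mix (/ 2) F1 (reroute F y u v (2 * e))).
  apply: inFam_mix; rewrite ?inE ?uA ?uy ?vA ?vy //; first lra.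
  by apply: inFam_reroute; rewrite ?inE ?uA ?uy ?vA ?vy //; lra.
by move=> w; rewrite Supp_mix tr1 transfer_reroute; field.
Qed.

Definition reach_set A F x : {set C} := [set z | excluded_middle_informative (reach A F x z)].

Lemma reach_setP A F x z : reflect (reach A F x z) (z \in reach_set A F x).
Proof. by rewrite inE; case: excluded_middle_informative => h; constructor. Qed.

Lemma reach_set_sub A F x : x \in A -> reach_set A F x \subset A.
Proof. by move=> xA; apply/subsetP => z /reach_setP; apply: reach_in. Qed.

(* A ballot meeting a reach set gives no flow outside it, so the reverse of
   [sum_Supp_le_approvers] holds. *)
Lemma approvers_reach_set A F x : inFam B A F -> x \in A ->
  approvers (reach_set A F x) <= \big[Rplus/R0]_(z in reach_set A F x) Supp F z.
Proof.
move=> hF xA; have [h0 [hz hs]] := hF.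
set D := reach_set A F x; have DA : D \subset A by apply: reach_set_sub.
rewrite /Supp exchange_big /approvers big_mkcond /=.
apply: sumR_le => y _; case: ifP => [/set0Pn [z1] | _]; last first.
  by apply: sumR_ge0 => w wD; apply: h0; apply: (subsetP DA).
rewrite in_setI => /andP [z1y z1D].
have Ay : A :&: y != set0 by apply/set0Pn; exists z1; rewrite inE (subsetP DA _ z1D) z1y.
rewrite -(hs y Ay) (bigID (mem D)) /= [X in _ + X]big1 => [|w /andP []]; last first.
  rewrite inE => /andP [wA wy] wD.
  case: (Rle_lt_or_eq_dec _ _ (h0 y w wA)) => [hpos | //].
  have /reach_setP hz1 := z1D.
  by case/negP: wD; apply/reach_setP; apply: reach_step hz1 z1y wA hpos.
rewrite Rplus_0_r; apply: sumR_le_subset => [w /andP [] // | w wD].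
by apply: h0; apply: (subsetP DA).
Qed.

Section Raise.
Variables (A : {set C}) (mu : R).
Hypothesis approvers_gt : forall D, D \subset A -> D != set0 -> mu * INR #|D| < approvers D.

Lemma raise_support_at F x0 : inFam B A F -> (forall x, x \in A -> mu <= Supp F x) ->
  x0 \in A -> Supp F x0 <= mu ->
  exists2 F', inFam B A F' & [/\ forall x, x \in A -> mu <= Supp F' x, mu < Supp F' x0
                              & forall x, mu < Supp F x -> mu < Supp F' x].
Proof.
move=> hF hmu x0A x0mu; set D := reach_set A F x0.
have DA : D \subset A by apply: reach_set_sub.
have x0D : x0 \in D by apply/reach_setP; apply: reach_refl.
(* The reach set of [x0] is not tight, so it holds some [z] above [mu]; pull a
   little support from [z] back to [x0]. *)
have [z zD muz] : exists2 z, z \in D & mu < Supp F z.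
  apply: NNPP => hno.
  have : \big[Rplus/R0]_(z in D) Supp F z <= \big[Rplus/R0]_(z in D) mu.
    by apply: sumR_le => z zD; apply: Rnot_lt_le => hz; apply: hno; exists z.
  have Dn : D != set0 by apply/set0Pn; exists x0.
  have := approvers_gt DA Dn; have := approvers_reach_set hF x0A.
  by rewrite sumR_const -/D; lra.
have zx0 : z != x0 by apply/eqP => ezx; move: muz; rewrite ezx; lra.
have [e0 e0p hT] := reach_transfer hF x0A (elimT (reach_setP _ _ _ _) zD).
have := Rmin_l e0 ((Supp F z - mu) / 2); have := Rmin_r e0 ((Supp F z - mu) / 2).
have := Rmin_pos _ ((Supp F z - mu) / 2) e0p ltac:(lra).
set e := Rmin _ _ => e0' ez ee0.
have [F' hF' tr] := hT e ltac:(lra).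
have Sz : mu < Supp F' z by rewrite tr /delta eqxx (negbTE zx0); lra.
have Sx0 : Supp F' x0 = Supp F x0 + e.
  by rewrite tr /delta eqxx eq_sym (negbTE zx0); ring.
have Sw w : w != z -> Supp F w <= Supp F' w.
  by move=> wz; rewrite tr /delta (negbTE wz); case: eqP => _; lra.
exists F' => //; split => [x xA | | x hx]; last 2 first.
- by rewrite Sx0; have := hmu x0 x0A; lra.
- by case: (eqVneq x z) => [-> | /Sw]; lra.
by case: (eqVneq x z) => [-> | /Sw]; have := hmu x xA; lra.
Qed.

Lemma raise_support F : inFam B A F -> (forall x, x \in A -> mu <= Supp F x) ->
  exists2 F', inFam B A F' & forall x, x \in A -> mu < Supp F' x.
Proof.
pose low G := [set x in A | Rle_dec (Supp G x) mu].
have lowP G x : reflect (x \in A /\ Supp G x <= mu) (x \in low G).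
  by rewrite inE; case: Rle_dec => h; rewrite ?andbT ?andbF; apply: (iffP idP) => // [[]].
suff: forall n G, (#|low G| < n)%N -> inFam B A G -> (forall x, x \in A -> mu <= Supp G x) ->
  exists2 F', inFam B A F' & forall x, x \in A -> mu < Supp F' x by apply.
elim=> [G | n IH G hn hG hmu]; first by rewrite ltn0.
have [low0 | [x0 /lowP [x0A x0mu]]] := set_0Vmem (low G).
  exists G => // x xA; apply: Rnot_le_lt => hle.
  by have := in_set0 x; rewrite -low0 => /lowP; case.
have [G' hG' [hmu' hx0 hup]] := raise_support_at hG hmu x0A x0mu.
apply: (IH G') => //.
rewrite (cardsD1 x0) (introT (lowP _ _) (conj x0A x0mu)) add1n ltnS in hn.
apply: (leq_ltn_trans _ hn); apply: subset_leq_card; apply/subsetP => x /lowP [xA xmu].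
rewrite in_setD1; apply/andP; split; last by apply/lowP; split=> //; apply: Rnot_lt_le => /hup; lra.
by apply/eqP => ex; move: xmu; rewrite ex; lra.
Qed.
End Raise.

Lemma exists_tight_set A F : inFamOpt B A F -> A != set0 ->
  exists2 D : {set C}, (D \subset A) && (D != set0) & approvers D <= maxMin B A * INR #|D|.
Proof.
move=> [hF hopt] An; apply: NNPP => hno.
have hgt (D : {set C}) : D \subset A -> D != set0 -> maxMin B A * INR #|D| < approvers D.
  by move=> DA Dn; apply: Rnot_le_lt => hle; apply: hno; exists D; rewrite ?DA.
have [F' hF' hlt] := raise_support hgt hF hopt.
have [x0 x0A hmin] := exists_argminR (Supp F') An.
by have := maxMin_ge_min hF' x0A hmin; have := hlt x0 x0A; lra.
Qed.

Definition hall_bound (t : R) A : Prop :=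
  forall D, D \subset A -> t * INR #|D| <= approvers D.

Lemma hall_bound_sub t A A' : A' \subset A -> hall_bound t A -> hall_bound t A'.
Proof. by move=> sA h D DA'; apply: h; apply: subset_trans sA. Qed.

Lemma hall_bound_le t t' A : t <= t' -> hall_bound t' A -> hall_bound t A.
Proof. by move=> tt h D DA; have := h D DA; have := pos_INR #|D|; nra. Qed.

Lemma hall_bound_opt A F : inFamOpt B A F -> hall_bound (maxMin B A) A.
Proof.
move=> [hF hopt] D DA; apply: Rle_trans (sum_Supp_le_approvers hF DA).
by rewrite -sumR_const; apply: sumR_le => x xD; apply: hopt; apply: (subsetP DA).
Qed.

Lemma card_INR_gt0 D : D != set0 -> 0 < INR #|D|.
Proof. by move=> Dn; apply/lt_0_INR/ltP; rewrite card_gt0. Qed.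

Lemma maxMin_ge_hall t A F : inFamOpt B A F -> A != set0 -> hall_bound t A ->
  t <= maxMin B A.
Proof.
move=> hF An hall; have [D /andP [DA Dn] tight] := exists_tight_set hF An.
apply: (Rmult_le_reg_r (INR #|D|)); first exact: card_INR_gt0.
by have := hall D DA; lra.
Qed.

Lemma maxMin_ge_hall_but t A F x : inFamOpt B A F -> x \in A -> t <= Supp F x ->
  hall_bound t (A :\ x) -> t <= maxMin B A.
Proof.
move=> hFo xA tx hall; have An : A != set0 by apply/set0Pn; exists x.
have [D /andP [DA Dn] tight] := exists_tight_set hFo An.
case xD : (x \in D); last first.
  apply: (Rmult_le_reg_r (INR #|D|)); first exact: card_INR_gt0.
  suff DAx : D \subset A :\ x by have := hall D DAx; lra.
  apply/subsetP => z zD; rewrite in_setD1 (subsetP DA _ zD) andbT.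
  by apply: contraTneq zD => ->; rewrite xD.
have := sum_Supp_le_approvers hFo.1 DA; rewrite (big_setD1 x xD) /=.
have : maxMin B A * INR #|D :\ x| <= \big[Rplus/R0]_(z in D :\ x) Supp F z.
  rewrite -sumR_const; apply: sumR_le => z; rewrite in_setD1 => /andP [_ zD].
  by apply: hFo.2; apply: (subsetP DA).
by move: tight; rewrite (cardsD1 x D) xD plus_INR /=; lra.
Qed.

Lemma approvers_ge_weight_add (Y : {set {set C}}) D D2 :
  (forall y, y \in Y -> y :&: D != set0) -> D2 \subset D :\: \bigcup_(y in Y) y ->
  INR (\sum_(y in Y) B y) + approvers D2 <= approvers D.
Proof.
move=> YD D2D; rewrite /approvers [X in _ <= X](bigID (mem Y)) /= INR_sum.
apply: Rplus_le_compat.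
  apply: Req_le; apply: eq_bigl => y.
  by case yY: (y \in Y); rewrite ?andbT ?andbF ?YD.
apply: sumR_le_subset => [y /set0Pn [x] | y _]; last exact: pos_INR.
rewrite in_setI => /andP [xy /(subsetP D2D)]; rewrite in_setD => /andP [xU xD].
apply/andP; split; first by apply/set0Pn; exists x; rewrite in_setI xy.
by apply: contra xU => yY; apply/bigcupP; exists y.
Qed.
End Flows.

Lemma Ce0 (C : finType) (ws : seq C) : Ce ws 0 = set0.
Proof. by apply/setP => x; rewrite !inE take0. Qed.

Lemma Ce_sub (C : finType) (ws : seq C) j i : (j <= i)%N -> Ce ws j \subset Ce ws i.
Proof.
by move=> ji; apply/subsetP => x; rewrite !inE -(subnKC ji) takeD mem_cat => ->.
Qed.

Lemma Ce_succ (C : finType) (ws : seq C) w0 j :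
  (j < size ws)%N -> Ce ws j.+1 = nth w0 ws j |: Ce ws j.
Proof. by move=> hj; apply/setP => x; rewrite !inE (take_nth w0 hj) mem_rcons in_cons. Qed.

Section ODHRun.
Variables (C : finType) (B : {set C} -> nat) (S : nat) (ws : seq C).
Hypothesis run : ODH_run B S ws.

Lemma odh_opt j c : (j < S)%N -> c \notin Ce ws j ->
  exists F, inFamOpt B (c |: Ce ws j) F.
Proof. by move=> jS cj; have [s [hs _]] := run.2 j jS; have [F [hF _]] := hs c cj; exists F. Qed.

Lemma odh_winner j c : (j < S)%N -> c \notin Ce ws j ->
  nth c ws j \notin Ce ws j /\
  exists2 F, inFamOpt B (nth c ws j |: Ce ws j) F &
             maxMin B (c |: Ce ws j) <= Supp F (nth c ws j).
Proof.
move=> jS cj; have [s [hs hw]] := run.2 j jS; have [mj hmax] := hw c.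
have [Fc [hFc sc]] := hs c cj; have [Fm [hFm sm]] := hs _ mj.
split=> //; exists Fm => //; rewrite -sm.
by apply: Rle_trans (hmax c cj); rewrite sc; apply: hFc.2; apply: setU11.
Qed.

Variables (i : nat) (c : C) (Y : {set {set C}}).
Hypotheses (hi : (i < S)%N) (hc : c \notin Ce ws i) (hY : forall y, y \in Y -> c \in y).

Let U := \bigcup_(y in Y) y.
Let k := #|Ce ws i :&: U|.
Let t := INR (\sum_(y in Y) B y) / INR (k + 1).

Lemma c_notin_Ce j : (j <= i)%N -> c \notin Ce ws j.
Proof. by move=> ji; apply: contra hc; apply: (subsetP (Ce_sub ws ji)). Qed.

Lemma maxMin_setU1_ge j : (j <= i)%N -> hall_bound B t (Ce ws j) -> t <= maxMin B (c |: Ce ws j).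
Proof.
move=> ji hall; have [F hF] := odh_opt (leq_ltn_trans ji hi) (c_notin_Ce ji).
apply: maxMin_ge_hall hF _ _; first by apply/set0Pn; exists c; rewrite setU11.
have cD_sub (D : {set C}) x : D \subset c |: Ce ws j -> x \in D -> x != c -> x \in Ce ws j.
  by move=> DA xD; move: (subsetP DA x xD); rewrite in_setU1 => /predU1P [->|//]; rewrite eqxx.
move=> D DA; case cD : (c \in D); last first.
  apply: hall; apply/subsetP => x xD; apply: (cD_sub _ _ DA xD).
  by apply/eqP => xc; move: cD; rewrite -xc xD.
(* Besides [c] and members of [C_e^i :&: U], [D] only has members of [D2]. *)
set D2 := D :\: (c |: U).
have D2j : D2 \subset Ce ws j.
  apply/subsetP => x; rewrite in_setD in_setU1 negb_or => /andP [/andP [xc _] xD].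
  exact: cD_sub DA xD xc.
have cardD : (#|D| <= k + 1 + #|D2|)%N.
  have DU : D \subset (c |: (Ce ws i :&: U)) :|: D2.
    apply/subsetP => x xD; rewrite !inE xD andbT.
    case: (eqVneq x c) => //= xc; case: (x \in U); rewrite ?andbT ?orbT //.
    by have /(subsetP (Ce_sub ws ji)) := cD_sub _ _ DA xD xc; rewrite inE => ->.
  apply: leq_trans (subset_leq_card DU) (leq_trans (leq_card_setU _ _).1 _).
  by rewrite leq_add2r cardsU1 addnC leq_add2l leq_b1.
have k1 : 0 < INR (k + 1) by apply/lt_0_INR/ltP; rewrite addn1.
have t0 : 0 <= t by apply: Rmult_le_pos; [apply: pos_INR | apply/Rlt_le/Rinv_0_lt_compat].
have weight : INR (\sum_(y in Y) B y) = t * INR (k + 1).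
  by rewrite /t; field; lra.
have YD y : y \in Y -> y :&: D != set0 by move=> yY; apply/set0Pn; exists c; rewrite inE hY.
have := approvers_ge_weight_add B YD (setDS D (subsetUr [set c] U)).
have := hall D2 D2j; have : INR #|D| <= INR (k + 1) + INR #|D2| by rewrite -plus_INR; apply/le_INR/leP.
by move/(Rmult_le_compat_l t _ _ t0); rewrite -/U -/D2 weight Rmult_plus_distr_l; lra.
Qed.

Lemma hall_Ce_succ j : (j < i)%N -> hall_bound B t (Ce ws j) -> hall_bound B t (Ce ws j.+1).
Proof.
move=> ji hall; have jS := ltn_trans ji hi.
have [mj [F hF tmF]] := odh_winner jS (c_notin_Ce (ltnW ji)).
have tm := Rle_trans _ _ _ (maxMin_setU1_ge (ltnW ji) hall) tmF.
have : t <= maxMin B (nth c ws j |: Ce ws j).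
  apply: maxMin_ge_hall_but hF (setU11 _ _) tm _.
  by apply: hall_bound_sub hall; rewrite setU1K.
rewrite (Ce_succ c); last by rewrite run.1.
by move/hall_bound_le; apply; apply: hall_bound_opt hF.
Qed.

Lemma hall_Ce j : (j <= i)%N -> hall_bound B t (Ce ws j).
Proof.
elim: j => [_ D | j IH ji]; last exact: hall_Ce_succ ji (IH (ltnW ji)).
by rewrite Ce0 subset0 => /eqP ->; rewrite cards0 Rmult_0_r; apply: approvers_ge0.
Qed.
End ODHRun.

Theorem lemma5 (V C : finType) (S : nat) (B : {set C} -> nat)
  (hS : (1 <= S <= #|C|)%N)
  (hB : (\sum_(A : {set C}) B A <= #|V|)%N)
  (ws : seq C) (hrun : ODH_run B S ws)
  (i : nat) (hi : (i < S)%N)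
  (c : C) (hc : c \notin Ce ws i)
  (Y : {set {set C}}) (hY : forall y, y \in Y -> c \in y) :
  Rle (Rdiv (INR (\sum_(y in Y) B y)%N)
            (INR (#|Ce ws i :&: \bigcup_(y in Y) y| + 1)%N))
      (maxMin B (c |: Ce ws i)).
Proof. exact: (maxMin_setU1_ge hrun hi hc hY (leqnn i) (hall_Ce hrun hi hc hY (leqnn i))). Qed.
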